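(* Consider the predator–prey system with predator-only harvesting $$\dot X=(1-Y)X,\qquad \dot Y=(X-U)Y,$$ on the open quadrant $\{(X,Y): X>0,\ Y>0\}$, under the feedback $U=Y$. Define $$V(X,Y)=\Psi(X)+\Psi(Y)+\Psi(1/X)+\Psi(Y/X)=\frac{(X-1)^2}{X}+Y-1-\ln Y+\frac{Y}{X}-1-\ln\!\Big(\frac{Y}{X}\Big).$$ Then $V$ is positive definite with respect to the equilibrium $(X,Y)=(1,1)$ (i.e. $V(1,1)=0$ and $V>0$ elsewhere on the quadrant), radially unbounded on the quadrant (i.e. $V(X,Y)\to\infty$ as $(X,Y)$ approaches the boundary $\{X=0\}\cup\{Y=0\}$ or as $X+Y\to\infty$), and along the closed-loop solutions $$\dot V=-\frac{(X-1)^2}{X}-(Y-1)^2,$$ which is negative definite on the quadrant. Hence $V$ is a strict Lyapunov function (strict CLF) for the closed loop on $\{X>0,Y>0\}$.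
   Context: $\Psi(S)=S-1-\ln S$ for $S>0$ (the Volterra Lyapunov building block); $\Psi(1)=0$ and $\Psi(S)>0$ for $S\neq1$. $X$ is the prey concentration, $Y$ the predator concentration, $U$ the harvesting rate. *)

From Stdlib Require Import Reals.
Open Scope R_scope.

Definition Psi (S : R) : R := S - 1 - ln S.

Definition V (X Y : R) : R := Psi X + Psi Y + Psi (/ X) + Psi (Y / X).

Definition fX (X Y : R) : R := (1 - Y) * X.
Definition fY (X Y : R) : R := (X - Y) * Y.

Definition Vdot (X Y : R) : R := - ((X - 1) ^ 2 / X) - (Y - 1) ^ 2.

(* Each of the four terms of V is Psi of a positive quantity, hence nonnegative, and
   Psi X + Psi (1/X) = (X - 1)^2 / X because the logarithms cancel; this gives positive
   definiteness.  Growth follows from (X - 1)^2 / X = X + 1/X - 2, which blows up as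
   X -> 0 or X -> oo, and Psi Y >= max (Y/2 - 1, -1 - ln Y), which blows up as Y -> 0
   or Y -> oo.  The derivative is the chain rule with Psi'(S) = 1 - 1/S. *)

From Stdlib Require Import Reals Lra.
Open Scope R_scope.

Lemma ln_lt_sub1 (S : R) : 0 < S -> S <> 1 -> ln S < S - 1.
Proof.
  intros HS H1.
  assert (Hln : ln S <> 0).
  { intro E. apply H1. rewrite <- (exp_ln S HS), E. apply exp_0. }
  pose proof (exp_ineq1 _ Hln) as H. rewrite exp_ln in H by exact HS. lra.
Qed.

Lemma ln_le_sub1 (S : R) : 0 < S -> ln S <= S - 1.
Proof.
  intros HS. destruct (Req_dec S 1) as [->|H1].
  - rewrite ln_1. lra.
  - left. now apply ln_lt_sub1.
Qed.

Lemma sqr_sub1_div_ge0 (X : R) : 0 < X -> 0 <= (X - 1) ^ 2 / X.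
Proof.
  intros HX. apply Rmult_le_pos; [apply pow2_ge_0 | left; now apply Rinv_0_lt_compat].
Qed.

Lemma sqr_sub1_div_gt0 (X : R) : 0 < X -> X <> 1 -> 0 < (X - 1) ^ 2 / X.
Proof.
  intros HX H1. apply Rdiv_lt_0_compat; [|exact HX].
  rewrite <- Rsqr_pow2. apply Rsqr_pos_lt. lra.
Qed.

Lemma Psi_1 : Psi 1 = 0.
Proof. unfold Psi. rewrite ln_1. ring. Qed.

Lemma Psi_ge0 (S : R) : 0 < S -> 0 <= Psi S.
Proof. intros HS. unfold Psi. pose proof (ln_le_sub1 S HS). lra. Qed.

Lemma Psi_gt0 (S : R) : 0 < S -> S <> 1 -> 0 < Psi S.
Proof. intros HS H1. unfold Psi. pose proof (ln_lt_sub1 S HS H1). lra. Qed.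

Lemma Psi_add_Psi_inv (X : R) : 0 < X -> Psi X + Psi (/ X) = (X - 1) ^ 2 / X.
Proof. intros HX. unfold Psi. rewrite ln_Rinv by exact HX. field. lra. Qed.

Lemma Psi_gt_neg_ln (S : R) : 0 < S -> - 1 - ln S < Psi S.
Proof. intros HS. unfold Psi. lra. Qed.

(* ln S = ln 2 + ln (S/2) <= ln 2 + S/2 - 1, and ln 2 < 1. *)
Lemma Psi_gt_half (S : R) : 0 < S -> S / 2 - 1 < Psi S.
Proof.
  intros HS. unfold Psi.
  assert (Hln2 : ln 2 < 1) by (pose proof (ln_lt_sub1 2 ltac:(lra) ltac:(lra)); lra).
  assert (Hsplit : ln S = ln 2 + ln (S / 2)) by (rewrite <- ln_mult by lra; f_equal; field).
  pose proof (ln_le_sub1 (S / 2) ltac:(lra)). lra.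
Qed.

Lemma derivable_pt_lim_Psi (g : R -> R) (t l : R) :
  derivable_pt_lim g t l -> 0 < g t ->
  derivable_pt_lim (fun s => Psi (g s)) t (l - l / g t).
Proof.
  intros Hg Hpos.
  pose proof (derivable_pt_lim_minus (fun s => g s - 1) (comp ln g) t (l - 0) (/ g t * l)
    (derivable_pt_lim_minus g (fct_cte 1) t l 0 Hg (derivable_pt_lim_const 1 t))
    (derivable_pt_lim_comp g ln t l (/ g t) Hg (derivable_pt_lim_ln _ Hpos))) as H.
  replace (l - l / g t) with (l - 0 - / g t * l) by (field; lra).
  exact H.
Qed.

Lemma derivable_pt_lim_inv (g : R -> R) (t l : R) :
  derivable_pt_lim g t l -> g t <> 0 ->
  derivable_pt_lim (fun s => / g s) t (- l / (g t) ^ 2).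
Proof.
  intros Hg Hnz.
  pose proof (derivable_pt_lim_div (fct_cte 1) g t 0 l
    (derivable_pt_lim_const 1 t) Hg Hnz) as H.
  apply derivable_pt_lim_ext with (f := (fct_cte 1 / g)%F).
  { intro s. unfold div_fct, fct_cte, Rdiv. ring. }
  replace (- l / (g t) ^ 2) with ((0 * g t - l * fct_cte 1 t) / (g t)²)
    by (unfold fct_cte, Rsqr; field; exact Hnz).
  exact H.
Qed.

Lemma V_closed_form (X Y : R) : 0 < X -> 0 < Y ->
  V X Y = (X - 1) ^ 2 / X + (Y - 1 - ln Y) + (Y / X - 1 - ln (Y / X)).
Proof.
  intros HX HY. unfold V.
  rewrite <- (Psi_add_Psi_inv X HX). unfold Psi. ring.
Qed.

Lemma V_1_1 : V 1 1 = 0.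
Proof. unfold V. rewrite Rinv_1, Rdiv_1_r, Psi_1. ring. Qed.

Lemma V_ge_sqr_sub1_div (X Y : R) : 0 < X -> 0 < Y -> (X - 1) ^ 2 / X <= V X Y.
Proof.
  intros HX HY. unfold V. rewrite <- (Psi_add_Psi_inv X HX).
  pose proof (Psi_ge0 Y HY). pose proof (Psi_ge0 (Y / X) (Rdiv_lt_0_compat _ _ HY HX)).
  lra.
Qed.

Lemma V_ge_Psi_Y (X Y : R) : 0 < X -> 0 < Y -> Psi Y <= V X Y.
Proof.
  intros HX HY. unfold V.
  pose proof (Psi_add_Psi_inv X HX). pose proof (sqr_sub1_div_ge0 X HX).
  pose proof (Psi_ge0 (Y / X) (Rdiv_lt_0_compat _ _ HY HX)).
  lra.
Qed.

Lemma V_pos (X Y : R) : 0 < X -> 0 < Y -> (X, Y) <> (1, 1) -> 0 < V X Y.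
Proof.
  intros HX HY Hne.
  pose proof (V_ge_Psi_Y X Y HX HY) as HVY.
  pose proof (V_ge_sqr_sub1_div X Y HX HY) as HVX.
  destruct (Req_dec X 1) as [->|HX1].
  - assert (HY1 : Y <> 1) by (intros ->; now apply Hne).
    pose proof (Psi_gt0 Y HY HY1). lra.
  - pose proof (sqr_sub1_div_gt0 X HX HX1). lra.
Qed.

(* With K = |M| + 2: 1/X > K, or -ln Y > K, or X > 2K, or Y > 2K each force V > M. *)
Lemma V_radially_unbounded (M : R) : exists delta Rr : R, 0 < delta /\
  forall X Y : R, 0 < X -> 0 < Y ->
    (X < delta \/ Y < delta \/ Rr < X + Y) -> M < V X Y.
Proof.
  set (K := Rabs M + 2).
  assert (HMK : M <= K - 2) by (unfold K; pose proof (Rle_abs M); lra).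
  assert (HK : 0 < K) by (unfold K; pose proof (Rabs_pos M); lra).
  exists (Rmin (exp (- K)) (/ K)), (4 * K). split.
  { apply Rmin_glb_lt; [apply exp_pos | now apply Rinv_0_lt_compat]. }
  intros X Y HX HY Hnear.
  assert (HVX : X + / X - 2 <= V X Y).
  { replace (X + / X - 2) with ((X - 1) ^ 2 / X) by (field; lra).
    now apply V_ge_sqr_sub1_div. }
  pose proof (V_ge_Psi_Y X Y HX HY) as HVY.
  pose proof (Rinv_0_lt_compat X HX).
  destruct Hnear as [HXd|[HYd|Hsum]].
  - assert (HXK : X < / K) by (eapply Rlt_le_trans; [exact HXd | apply Rmin_r]).
    assert (HinvX : / / K < / X) by (apply Rinv_lt_contravar; [nra | exact HXK]).
    rewrite Rinv_inv in HinvX. lra.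
  - assert (HYK : Y < exp (- K)) by (eapply Rlt_le_trans; [exact HYd | apply Rmin_l]).
    pose proof (ln_increasing _ _ HY HYK) as Hln. rewrite ln_exp in Hln.
    pose proof (Psi_gt_neg_ln Y HY). lra.
  - destruct (Rlt_le_dec (2 * K) X) as [HXK|HXK].
    + lra.
    + pose proof (Psi_gt_half Y HY). lra.
Qed.

Lemma V_derivative (X Y : R -> R) (t : R) : 0 < X t -> 0 < Y t ->
  derivable_pt_lim X t (fX (X t) (Y t)) ->
  derivable_pt_lim Y t (fY (X t) (Y t)) ->
  derivable_pt_lim (fun s => V (X s) (Y s)) t (Vdot (X t) (Y t)).
Proof.
  intros HX HY DX DY.
  pose proof (derivable_pt_lim_Psi X t _ DX HX) as DPsiX.
  pose proof (derivable_pt_lim_Psi Y t _ DY HY) as DPsiY.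
  pose proof (derivable_pt_lim_Psi (fun s => / X s) t _
    (derivable_pt_lim_inv X t _ DX ltac:(lra)) (Rinv_0_lt_compat _ HX)) as DPsiInvX.
  pose proof (derivable_pt_lim_Psi (fun s => Y s / X s) t _
    (derivable_pt_lim_div Y X t _ _ DY DX ltac:(lra)) (Rdiv_lt_0_compat _ _ HY HX))
    as DPsiYX.
  pose proof (derivable_pt_lim_plus _ _ _ _ _
    (derivable_pt_lim_plus _ _ _ _ _
      (derivable_pt_lim_plus _ _ _ _ _ DPsiX DPsiY) DPsiInvX) DPsiYX) as DV.
  match type of DV with derivable_pt_lim _ _ ?l =>
    replace (Vdot (X t) (Y t)) with l by (unfold Vdot, fX, fY, Rsqr; field; lra)
  end.
  exact DV.
Qed.

Lemma Vdot_1_1 : Vdot 1 1 = 0.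
Proof. unfold Vdot. field. Qed.

Lemma Vdot_neg (X Y : R) : 0 < X -> 0 < Y -> (X, Y) <> (1, 1) -> Vdot X Y < 0.
Proof.
  intros HX HY Hne. unfold Vdot.
  pose proof (sqr_sub1_div_ge0 X HX). pose proof (pow2_ge_0 (Y - 1)).
  destruct (Req_dec X 1) as [->|HX1].
  - assert (HY1 : Y - 1 <> 0) by (intro; apply Hne; f_equal; lra).
    pose proof (Rsqr_pos_lt _ HY1). rewrite Rsqr_pow2 in *. lra.
  - pose proof (sqr_sub1_div_gt0 X HX HX1). lra.
Qed.

Theorem theorem1 :
  (forall X Y : R, 0 < X -> 0 < Y ->
     V X Y = (X - 1) ^ 2 / X + (Y - 1 - ln Y) + (Y / X - 1 - ln (Y / X))) /\
  (V 1 1 = 0 /\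
   (forall X Y : R, 0 < X -> 0 < Y -> (X, Y) <> (1, 1) -> 0 < V X Y)) /\
  (forall M : R, exists delta Rr : R, 0 < delta /\
     forall X Y : R, 0 < X -> 0 < Y ->
       (X < delta \/ Y < delta \/ Rr < X + Y) -> M < V X Y) /\
  (forall (X Y : R -> R) (t : R), 0 < X t -> 0 < Y t ->
     derivable_pt_lim X t (fX (X t) (Y t)) ->
     derivable_pt_lim Y t (fY (X t) (Y t)) ->
     derivable_pt_lim (fun s => V (X s) (Y s)) t (Vdot (X t) (Y t))) /\
  (Vdot 1 1 = 0 /\
   (forall X Y : R, 0 < X -> 0 < Y -> (X, Y) <> (1, 1) -> Vdot X Y < 0)).
Proof.
  split; [exact V_closed_form |].
  split; [split; [exact V_1_1 | exact V_pos] |].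
  split; [exact V_radially_unbounded |].
  split; [exact V_derivative |].
  split; [exact Vdot_1_1 | exact Vdot_neg].
Qed.
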